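(* Let $R$ be a commutative ring and let $(A,d)$ be a differential graded $R$-algebra. (1) If the graded algebra $\ker(d)$ is graded-Noetherian, then $(A,d)$ is dg-Noetherian. (2) If $\ker(d)$ is graded-Artinian, then $(A,d)$ is dg-Artinian.
   Context: A differential graded (dg) $R$-algebra $(A,d)$ is a $\mathbb{Z}$-graded $R$-algebra $A$ with an $R$-linear endomorphism $d$, homogeneous of degree $1$, with $d^2=0$ and $d(ab)=d(a)b+(-1)^{|a|}a\,d(b)$ for homogeneous $a,b$. Then $\ker(d)$ (the cycles) is a graded subalgebra of $A$. A graded algebra is graded-Noetherian (resp. graded-Artinian) if it satisfies the ascending (resp. descending) chain condition on graded ideals. A dg-ideal of $(A,d)$ is a graded ideal $I$ with $d(I)\subseteq I$; $(A,d)$ is dg-Noetherian (resp. dg-Artinian) if it satisfies the ascending (resp. descending) chain condition on dg-ideals (i.e. on dg-submodules of $A$ viewed as a dg-module over itself). *)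

From HB Require Import structures.
From mathcomp Require Import all_boot all_order all_algebra.
Set Implicit Arguments. Unset Strict Implicit. Unset Printing Implicit Defensive.
Import Order.TTheory GRing.Theory Num.Theory.
Local Open Scope ring_scope.

(* A Z-grading on an R-algebra A is encoded by its family of homogeneous
   projections pi n : A -> A (R-linear), A = (+)_n pi n A. *)
Definition is_grading (R : comPzRingType) (A : algType R)
    (pi : int -> {linear A -> A}) : Prop :=
  [/\
      forall (m n : int) (x : A), pi m (pi n x) = if m == n then pi n x else 0,
      forall x : A, exists s : seq int, uniq s /\ x = \sum_(n <- s) pi n x,
      forall (m n : int) (x y : A),
        pi (m + n) (pi m x * pi n y) = pi m x * pi n y
    &
      pi 0 1 = 1 ].

Definition homog (R : comPzRingType) (A : algType R)
    (pi : int -> {linear A -> A}) (n : int) (x : A) : Prop := pi n x = x.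

Definition is_dg_algebra (R : comPzRingType) (A : algType R)
    (pi : int -> {linear A -> A}) (d : {linear A -> A}) : Prop :=
  [/\ is_grading pi,
      forall (n : int) (x : A), homog pi (n + 1) (d (pi n x)),
      forall x : A, d (d x) = 0
    &
      forall (m n : int) (x y : A),
        d (pi m x * pi n y) =
        d (pi m x) * pi n y + (-1) ^+ `|m|%N * (pi m x * d (pi n y)) ].

Definition cycles (R : comPzRingType) (A : algType R) (d : {linear A -> A})
  : A -> Prop := fun x => d x = 0.

(* I is a graded (left) ideal of the graded subring S of A (S given as a
   predicate which is a graded subalgebra) *)
Definition graded_ideal_of (R : comPzRingType) (A : algType R)
    (pi : int -> {linear A -> A}) (S I : A -> Prop) : Prop :=
  [/\ forall x, I x -> S x,
      I 0,
      forall x y, I x -> I y -> I (x - y),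
      forall s x, S s -> I x -> I (s * x)
    & forall (n : int) x, I x -> I (pi n x) ].

Definition dg_ideal (R : comPzRingType) (A : algType R)
    (pi : int -> {linear A -> A}) (d : {linear A -> A}) (I : A -> Prop) : Prop :=
  graded_ideal_of pi (fun _ => True) I /\ forall x, I x -> I (d x).

Definition ACC (T : Type) (P : (T -> Prop) -> Prop) : Prop :=
  forall I : nat -> T -> Prop,
    (forall k, P (I k)) ->
    (forall k x, I k x -> I k.+1 x) ->
    exists N, forall k, (N <= k)%N -> forall x, I k x <-> I N x.

Definition DCC (T : Type) (P : (T -> Prop) -> Prop) : Prop :=
  forall I : nat -> T -> Prop,
    (forall k, P (I k)) ->
    (forall k x, I k.+1 x -> I k x) ->
    exists N, forall k, (N <= k)%N -> forall x, I k x <-> I N x.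

Definition graded_noetherian (R : comPzRingType) (A : algType R)
    (pi : int -> {linear A -> A}) (S : A -> Prop) : Prop :=
  ACC (graded_ideal_of pi S).
Definition graded_artinian (R : comPzRingType) (A : algType R)
    (pi : int -> {linear A -> A}) (S : A -> Prop) : Prop :=
  DCC (graded_ideal_of pi S).

Definition dg_noetherian (R : comPzRingType) (A : algType R)
    (pi : int -> {linear A -> A}) (d : {linear A -> A}) : Prop :=
  ACC (dg_ideal pi d).
Definition dg_artinian (R : comPzRingType) (A : algType R)
    (pi : int -> {linear A -> A}) (d : {linear A -> A}) : Prop :=
  DCC (dg_ideal pi d).

From mathcomp Require Import all_boot all_order all_algebra.
Set Implicit Arguments. Unset Strict Implicit. Unset Printing Implicit Defensive.
Import GRing.Theory.
Local Open Scope ring_scope.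

(* For a dg-ideal I, its cycles Z(I) = I ∩ ker d and its boundaries
   B(I) = d(I) are graded ideals of the cycle algebra Z(A): for a homogeneous
   cycle s of degree m the Leibniz rule gives s * d y = ±d(s * y). Moreover a
   dg-ideal I ⊆ J with Z(J) ⊆ I and B(J) ⊆ B(I) equals J: for x ∈ J pick y ∈ I
   with d x = d y; then x - y ∈ Z(J) ⊆ I, so x ∈ I. Hence a monotone chain of
   dg-ideals stabilizes as soon as the chains of its cycles and of its
   boundaries do, and these are chains of graded ideals of Z(A). *)

Definition stable_from (T : Type) (I : nat -> T -> Prop) (N : nat) : Prop :=
  forall k, (N <= k)%N -> forall x, I k x <-> I N x.

Lemma stable_from_leq (T : Type) (I : nat -> T -> Prop) (N M : nat) :
  stable_from I N -> (N <= M)%N -> stable_from I M.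
Proof.
move=> stN leNM k leMk x.
have := stN k (leq_trans leNM leMk) x; have := stN M leNM x; tauto.
Qed.

Lemma ascending_chain_leq (T : Type) (I : nat -> T -> Prop) :
  (forall k x, I k x -> I k.+1 x) ->
  forall j k, (j <= k)%N -> forall x, I j x -> I k x.
Proof.
move=> incI j k /subnK <-; elim: (k - j)%N => // n IHn x Ijx.
by rewrite addSn; apply/incI/IHn.
Qed.

Lemma descending_chain_leq (T : Type) (I : nat -> T -> Prop) :
  (forall k x, I k.+1 x -> I k x) ->
  forall j k, (j <= k)%N -> forall x, I k x -> I j x.
Proof.
move=> decI j k /subnK <-; elim: (k - j)%N => // n IHn x Ikx.
by apply/IHn/decI; rewrite -addSn.
Qed.

Section ZmodPredicates.

Variables (V : zmodType) (d : V -> V).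

Definition cycles_of (I : V -> Prop) : V -> Prop := fun x => I x /\ d x = 0.

Definition boundaries_of (I : V -> Prop) : V -> Prop :=
  fun x => exists2 y, I y & x = d y.

Lemma cycles_of_sub (I J : V -> Prop) :
  (forall x, I x -> J x) -> forall x, cycles_of I x -> cycles_of J x.
Proof. by move=> IJ x [/IJ]. Qed.

Lemma boundaries_of_sub (I J : V -> Prop) :
  (forall x, I x -> J x) -> forall x, boundaries_of I x -> boundaries_of J x.
Proof. by move=> IJ _ [y /IJ Jy ->]; exists y. Qed.

Hypothesis dB : {morph d : x y / x - y}.
Variables I J : V -> Prop.
Hypotheses (I0 : I 0) (IB : forall x y, I x -> I y -> I (x - y)).
Hypothesis JB : forall x y, J x -> J y -> J (x - y).

Lemma sub_of_cycles_boundaries :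
  (forall x, I x -> J x) -> (forall x, cycles_of J x -> I x) ->
  (forall x, boundaries_of J x -> boundaries_of I x) ->
  forall x, J x -> I x.
Proof.
move=> IJ ZJI BJI x Jx.
have [y Iy dxy] := BJI (d x) (ex_intro2 _ _ x Jx erefl).
have Ixy : I (x - y).
  by apply: ZJI; split; [apply: JB => //; apply: IJ | rewrite dB dxy subrr].
have -> : x = (x - y) - (0 - y) by rewrite sub0r opprK subrK.
by apply: IB => //; apply: IB.
Qed.

End ZmodPredicates.

Section GradedAlgebra.

Variables (R : comPzRingType) (A : algType R) (pi : int -> {linear A -> A}).
Hypothesis gradedA : is_grading pi.

Lemma mul_ind_homog (P : A -> Prop) (s x : A) :
  P 0 -> (forall u v, P u -> P v -> P (u + v)) ->
  (forall m n, P (pi m s * pi n x)) -> P (s * x).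
Proof.
case: gradedA => _ decA _ _ P0 PD Phom.
have [r1 [_ ->]] := decA s; have [r2 [_ ->]] := decA x.
rewrite mulr_suml; apply: big_ind => // m _.
by rewrite mulr_sumr; apply: big_ind.
Qed.

End GradedAlgebra.

Section DGAlgebra.

Variables (R : comPzRingType) (A : algType R).
Variables (pi : int -> {linear A -> A}) (d : {linear A -> A}).
Hypothesis dgA : is_dg_algebra pi d.

Lemma pi_d (n : int) (x : A) : pi n (d x) = d (pi (n - 1) x).
Proof.
case: dgA => -[pi_pi decA _ _] d_homog _ _.
have [r [_ ->]] := decA x; rewrite !linear_sum; apply: eq_bigr => k _.
rewrite -(d_homog k x) pi_pi d_homog pi_pi -(inj_eq (addIr (-1))) addrK.
by case: eqP; rewrite ?linear0.
Qed.

Lemma d_pi_cycle (m : int) (x : A) : d x = 0 -> d (pi m x) = 0.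
Proof. by move=> dx; rewrite -[m](addrK 1) -pi_d dx linear0. Qed.

Lemma d_signr (k : nat) (x : A) : d ((-1) ^+ k * x) = (-1) ^+ k * d x.
Proof. by rewrite -signr_odd !mulr_sign; case: odd; rewrite ?linearN. Qed.

Lemma d_mul_cycle_homog (m n : int) (s x : A) : d s = 0 ->
  d (pi m s * pi n x) = (-1) ^+ `|m|%N * (pi m s * d (pi n x)).
Proof. by case: dgA => _ _ _ leibniz ds; rewrite leibniz d_pi_cycle // mul0r add0r. Qed.

Lemma cycles_mul_closed (s x : A) : d s = 0 -> d x = 0 -> d (s * x) = 0.
Proof.
case: dgA => gradedA _ _ _ ds dx.
apply: (mul_ind_homog gradedA (P := fun y => d y = 0)) => [|u v du dv|m n].
- exact: linear0.
- by rewrite linearD du dv addr0.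
- by rewrite d_mul_cycle_homog // d_pi_cycle // mulr0 mulr0.
Qed.

Lemma cycle_mul_d_homog (m n : int) (s x : A) : d s = 0 ->
  pi m s * d (pi n x) = d ((-1) ^+ `|m|%N * (pi m s * pi n x)).
Proof. by move=> ds; rewrite d_signr d_mul_cycle_homog // signrMK. Qed.

Lemma graded_ideal_cycles_of (I : A -> Prop) :
  dg_ideal pi d I -> graded_ideal_of pi (cycles d) (cycles_of d I).
Proof.
move=> [[_ I0 IB IM Ipi] _]; split.
- by move=> x [].
- by split; rewrite ?linear0.
- by move=> x y [Ix dx] [Iy dy]; split; [apply: IB | rewrite linearB dx dy subr0].
- by move=> s x ds [Ix dx]; split; [apply: IM | apply: cycles_mul_closed].
- by move=> n x [Ix dx]; split; [apply: Ipi | apply: d_pi_cycle].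
Qed.

Lemma graded_ideal_boundaries_of (I : A -> Prop) :
  dg_ideal pi d I -> graded_ideal_of pi (cycles d) (boundaries_of d I).
Proof.
case: dgA => gradedA _ dd _ [[_ I0 IB IM Ipi] _].
have B0 : boundaries_of d I 0 by exists 0; rewrite ?linear0.
have BB x y :
    boundaries_of d I x -> boundaries_of d I y -> boundaries_of d I (x - y).
  by move=> [u Iu ->] [v Iv ->]; exists (u - v); [apply: IB | rewrite linearB].
split=> //.
- by move=> _ [y _ ->]; apply: dd.
- move=> s _ ds [y Iy ->]; apply: (mul_ind_homog gradedA) => // [u v Bu Bv|m n].
    by rewrite -[v]opprK -[- v]sub0r; apply: (BB) => //; apply: (BB).
  rewrite pi_d cycle_mul_d_homog //.
  exists ((-1) ^+ `|m|%N * (pi m s * pi (n - 1) y)) => //.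
  by apply: (IM) => //; apply: (IM) => //; apply: Ipi.
- by move=> n _ [y Iy ->]; exists (pi (n - 1) y); [apply: Ipi | rewrite pi_d].
Qed.

Lemma dg_ideal_sub_of_cycles_boundaries (I J : A -> Prop) :
  dg_ideal pi d I -> dg_ideal pi d J -> (forall x, I x -> J x) ->
  (forall x, cycles_of d J x -> I x) ->
  (forall x, boundaries_of d J x -> boundaries_of d I x) ->
  forall x, J x -> I x.
Proof.
move=> [[_ I0 IB _ _] _] [[_ _ JB _ _] _].
exact: (sub_of_cycles_boundaries (linearB d) I0 IB JB).
Qed.

Lemma dg_chain_stable (I : nat -> A -> Prop) (N : nat) :
  (forall k, dg_ideal pi d (I k)) ->
  (forall k, (N <= k)%N ->
    (forall x, I N x -> I k x) \/ (forall x, I k x -> I N x)) ->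
  stable_from (fun k => cycles_of d (I k)) N ->
  stable_from (fun k => boundaries_of d (I k)) N ->
  stable_from I N.
Proof.
move=> dgI cmpI stZ stB k leNk x.
have [INk|IkN] := cmpI k leNk; split; try by [apply: INk | apply: IkN].
- apply: (dg_ideal_sub_of_cycles_boundaries (dgI N) (dgI k) INk) => y.
    by move/(stZ k leNk) => [].
  by move/(stB k leNk).
- apply: (dg_ideal_sub_of_cycles_boundaries (dgI k) (dgI N) IkN) => y.
    by move/(stZ k leNk) => [].
  by move/(stB k leNk).
Qed.

Lemma dg_noetherian_of_cycles :
  graded_noetherian pi (cycles d) -> dg_noetherian pi d.
Proof.
move=> accZ I dgI incI.
have [N1 stZ] := accZ _ (fun k => graded_ideal_cycles_of (dgI k))
  (fun k => cycles_of_sub (incI k)).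
have [N2 stB] := accZ _ (fun k => graded_ideal_boundaries_of (dgI k))
  (fun k => boundaries_of_sub (incI k)).
exists (maxn N1 N2); apply: dg_chain_stable => //.
- by move=> k le_k; left; apply: ascending_chain_leq.
- exact: stable_from_leq stZ (leq_maxl _ _).
- exact: stable_from_leq stB (leq_maxr _ _).
Qed.

Lemma dg_artinian_of_cycles :
  graded_artinian pi (cycles d) -> dg_artinian pi d.
Proof.
move=> dccZ I dgI decI.
have [N1 stZ] := dccZ _ (fun k => graded_ideal_cycles_of (dgI k))
  (fun k => cycles_of_sub (decI k)).
have [N2 stB] := dccZ _ (fun k => graded_ideal_boundaries_of (dgI k))
  (fun k => boundaries_of_sub (decI k)).
exists (maxn N1 N2); apply: dg_chain_stable => //.
- by move=> k le_k; right; apply: descending_chain_leq.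
- exact: stable_from_leq stZ (leq_maxl _ _).
- exact: stable_from_leq stB (leq_maxr _ _).
Qed.

End DGAlgebra.

Theorem corollary2p3 (R : comPzRingType) (A : algType R)
    (pi : int -> {linear A -> A}) (d : {linear A -> A}) :
  is_dg_algebra pi d ->
  (graded_noetherian pi (cycles d) -> dg_noetherian pi d) /\
  (graded_artinian pi (cycles d) -> dg_artinian pi d).
Proof.
move=> dgA; split; [exact: dg_noetherian_of_cycles | exact: dg_artinian_of_cycles].
Qed.
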